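(* Let $P:\mathcal C^{op}\to\mathbf{Pos}$ and $Q:\mathcal D^{op}\to\mathbf{Pos}$ be doctrines and let $(L,\lambda):P\to Q$, $(R,\rho):Q\to P$ be 1-arrows of $\mathbf{IdxPos}$ forming an adjunction $(L,\lambda)\dashv(R,\rho)$ in $\mathbf{IdxPos}$ with unit $\eta:\mathrm{Id}_{\mathcal C}\Rightarrow RL$ and counit $\epsilon:LR\Rightarrow\mathrm{Id}_{\mathcal D}$. Then the natural transformation $\square=\lambda\cdot(P\eta^{op})\cdot(\rho L^{op}):Q\circ L^{op}\Rightarrow Q\circ L^{op}$, with components $$\square_X=\lambda_X\circ P(\eta_X)\circ\rho_{LX}:Q(LX)\to Q(LX),$$ is an interior operator on the doctrine $Q\circ L^{op}:\mathcal C^{op}\to\mathbf{Pos}$.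
   Context: A doctrine is a functor $P:\mathcal C^{op}\to\mathbf{Pos}$; for $t:X\to Y$, $P(t):PY\to PX$ is reindexing. In the 2-category $\mathbf{IdxPos}$, a 1-arrow $(F,f):P\to Q$ (with $P:\mathcal C^{op}\to\mathbf{Pos}$, $Q:\mathcal D^{op}\to\mathbf{Pos}$) is a functor $F:\mathcal C\to\mathcal D$ with a natural transformation $f:P\Rightarrow Q\circ F^{op}$; a 2-arrow $\theta:(F,f)\Rightarrow(F',f')$ is a natural transformation $\theta:F\Rightarrow F'$ with $f_X(\alpha)\le Q(\theta_X)(f'_X(\alpha))$ for all $X,\alpha$; composition of $(G,g)$ then $(F,f)$ is $(FG,(fG^{op})\cdot g)$ (components $f_{GX}\circ g_X$), and 2-arrows compose as natural transformations. An adjunction in $\mathbf{IdxPos}$ is in the usual 2-categorical sense; equivalently, $L\dashv R$ is an adjunction of categories with unit $\eta$, counit $\epsilon$, and $\alpha\le P(\eta_X)(\rho_{LX}(\lambda_X\alpha))$ for $\alpha\in PX$, $\lambda_{RY}(\rho_Y\beta)\le Q(\epsilon_Y)(\beta)$ for $\beta\in QY$. An interior operator on a doctrine $M:\mathcal C^{op}\to\mathbf{Pos}$ is a natural transformation $\square:M\Rightarrow M$ with $\square_X(\alpha)\le\alpha$ and $\square_X(\alpha)\le\square_X(\square_X(\alpha))$ for all $X$ and $\alpha\in MX$. *)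

Unset Implicit Arguments.


Record Category := {
  ob :> Type;
  hom : ob -> ob -> Type;
  idm : forall X, hom X X;
  comp : forall X Y Z, hom Y Z -> hom X Y -> hom X Z;
  comp_id_l : forall X Y (f : hom X Y), comp X Y Y (idm Y) f = f;
  comp_id_r : forall X Y (f : hom X Y), comp X X Y f (idm X) = f;
  comp_assoc : forall X Y Z W (f : hom X Y) (g : hom Y Z) (h : hom Z W),
      comp X Z W h (comp X Y Z g f) = comp X Y W (comp Y Z W h g) f
}.
Arguments hom {c} X Y.
Arguments idm {c} X.
Arguments comp {c X Y Z} g f.

Record Functor (C D : Category) := {
  fobj :> C -> D;
  fmap : forall X Y : C, hom X Y -> hom (fobj X) (fobj Y);
  fmap_id : forall X, fmap X X (idm X) = idm (fobj X);
  fmap_comp : forall X Y Z (f : hom X Y) (g : hom Y Z),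
      fmap X Z (comp g f) = comp (fmap Y Z g) (fmap X Y f)
}.
Arguments fmap {C D} F {X Y} t : rename.

Definition Fid (C : Category) : Functor C C.
Proof.
  refine (@Build_Functor C C (fun X => X) (fun X Y t => t) _ _);
  reflexivity.
Defined.

Definition Fcomp {C D E : Category} (G : Functor D E) (F : Functor C D)
  : Functor C E.
Proof.
  refine (@Build_Functor C E (fun X => G (F X))
            (fun X Y t => fmap G (fmap F t)) _ _).
  - intros X; rewrite fmap_id; apply fmap_id.
  - intros X Y Z f g; rewrite fmap_comp; apply fmap_comp.
Defined.

Record NatTrans (C D : Category) (F G : Functor C D) := {
  ntc :> forall X : C, hom (F X) (G X);
  nt_nat : forall X Y (t : hom X Y),
      comp (fmap G t) (ntc X) = comp (ntc Y) (fmap F t)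
}.
Arguments NatTrans {C D} F G.
Arguments ntc {C D F G} n X.

Record Poset := {
  pcar :> Type;
  ple : pcar -> pcar -> Prop;
  ple_refl : forall a, ple a a;
  ple_trans : forall a b c, ple a b -> ple b c -> ple a c;
  ple_antisym : forall a b, ple a b -> ple b a -> a = b
}.
Arguments ple {p} a b.

Record Doctrine (C : Category) := {
  dob :> C -> Poset;
  dmap : forall X Y : C, hom X Y -> dob Y -> dob X;
  dmap_mono : forall X Y (t : hom X Y) (a b : dob Y),
      ple a b -> ple (dmap X Y t a) (dmap X Y t b);
  dmap_id : forall X (a : dob X), dmap X X (idm X) a = a;
  dmap_comp : forall X Y Z (f : hom X Y) (g : hom Y Z) (a : dob Z),
      dmap X Z (comp g f) a = dmap X Y f (dmap Y Z g a)
}.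
Arguments dmap {C} P {X Y} t a : rename.

Definition doctrine_pre {C D : Category} (Q : Doctrine D) (F : Functor C D)
  : Doctrine C.
Proof.
  refine (@Build_Doctrine C (fun X => Q (F X))
            (fun X Y t a => dmap Q (fmap F t) a) _ _ _).
  - intros X Y t a b H; apply dmap_mono; exact H.
  - intros X a; simpl; rewrite fmap_id; apply dmap_id.
  - intros X Y Z f g a; simpl; rewrite fmap_comp; apply dmap_comp.
Defined.

Record Arrow1 (C D : Category) (P : Doctrine C) (Q : Doctrine D) := {
  a1F : Functor C D;
  a1f : forall X : C, P X -> Q (a1F X);
  a1f_mono : forall X (a b : P X), ple a b -> ple (a1f X a) (a1f X b);
  a1f_nat : forall X Y (t : hom X Y) (a : P Y),
      a1f X (dmap P t a) = dmap Q (fmap a1F t) (a1f Y a)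
}.
Arguments Arrow1 {C D} P Q.
Arguments a1F {C D P Q} A : rename.
Arguments a1f {C D P Q} A X a : rename.

Definition id1 {C : Category} (P : Doctrine C) : Arrow1 P P.
Proof.
  refine (@Build_Arrow1 C C P P (Fid C) (fun X a => a) _ _).
  - intros X a b H; exact H.
  - intros X Y t a; reflexivity.
Defined.

Definition comp1 {C D E : Category} {P : Doctrine C} {Q : Doctrine D}
  {S : Doctrine E} (Ff : Arrow1 Q S) (Gg : Arrow1 P Q) : Arrow1 P S.
Proof.
  refine (@Build_Arrow1 C E P S (Fcomp (a1F Ff) (a1F Gg))
            (fun X a => a1f Ff (a1F Gg X) (a1f Gg X a)) _ _).
  - intros X a b H; apply a1f_mono, a1f_mono, H.
  - intros X Y t a; simpl; rewrite a1f_nat; apply a1f_nat.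
Defined.

Definition is_2arrow {C D : Category} {P : Doctrine C} {Q : Doctrine D}
  {A B : Arrow1 P Q} (theta : NatTrans (a1F A) (a1F B)) : Prop :=
  forall X (a : P X), ple (a1f A X a) (dmap Q (ntc theta X) (a1f B X a)).

Definition is_adjunction {C D : Category} {P : Doctrine C} {Q : Doctrine D}
  (Ll : Arrow1 P Q) (Rr : Arrow1 Q P)
  (eta : NatTrans (a1F (id1 P)) (a1F (comp1 Rr Ll)))
  (eps : NatTrans (a1F (comp1 Ll Rr)) (a1F (id1 Q))) : Prop :=
  is_2arrow eta /\ is_2arrow eps /\
  (forall X : C,
     comp (ntc eps (a1F Ll X)) (fmap (a1F Ll) (ntc eta X)) = idm (a1F Ll X)) /\
  (forall Y : D,
     comp (fmap (a1F Rr) (ntc eps Y)) (ntc eta (a1F Rr Y)) = idm (a1F Rr Y)).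

Definition is_interior_operator {C : Category} (M : Doctrine C)
  (box : forall X : C, M X -> M X) : Prop :=
  (forall X (a b : M X), ple a b -> ple (box X a) (box X b)) /\
  (forall X Y (t : hom X Y) (a : M Y), box X (dmap M t a) = dmap M t (box Y a)) /\
  (* deflationary and "idempotent" *)
  (forall X (a : M X), ple (box X a) a) /\
  (forall X (a : M X), ple (box X a) (box X (box X a))).


(* The operator is the comonad [LR] seen through the doctrines.  The counit
   2-arrow gives [lambda o rho <= Q(eps)]; reindexing along [L eta] and using
   the triangle identity [eps_L o L eta = id] turns this into [box <= id].
   The unit 2-arrow [alpha <= P(eta)(rho (lambda alpha))], instantiated at
   [alpha = P(eta)(rho a)] and pushed through the monotone [lambda], gives
   [box a <= box (box a)].  Naturality of [box] comes from that of [lambda],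
   [rho] and [eta]. *)

Lemma dmap_retraction {C : Category} (P : Doctrine C) {X Y : C}
  (s : hom X Y) (r : hom Y X) :
  comp r s = idm X -> forall a : P X, dmap P s (dmap P r a) = a.
Proof.
  intros Hrs a.
  rewrite <- dmap_comp, Hrs.
  apply dmap_id.
Qed.

Lemma dmap_natural {C D : Category} (P : Doctrine D) {F G : Functor C D}
  (theta : NatTrans F G) {X Y : C} (t : hom X Y) (b : P (G Y)) :
  dmap P (ntc theta X) (dmap P (fmap G t) b)
  = dmap P (fmap F t) (dmap P (ntc theta Y) b).
Proof.
  rewrite <- !dmap_comp.
  rewrite nt_nat.
  reflexivity.
Qed.

Section AdjunctionInterior.

Variables (C D : Category) (P : Doctrine C) (Q : Doctrine D).
Variables (Ll : Arrow1 P Q) (Rr : Arrow1 Q P).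
Variable eta : NatTrans (a1F (id1 P)) (a1F (comp1 Rr Ll)).
Variable eps : NatTrans (a1F (comp1 Ll Rr)) (a1F (id1 Q)).

Local Notation L := (a1F Ll).

Definition adj_interior (X : C) (a : Q (L X)) : Q (L X) :=
  a1f Ll X (dmap P (ntc eta X) (a1f Rr (L X) a)).

Lemma adj_interior_mono (X : C) (a b : Q (L X)) :
  ple a b -> ple (adj_interior X a) (adj_interior X b).
Proof.
  intros Hab; unfold adj_interior; simpl.
  apply a1f_mono, dmap_mono, a1f_mono, Hab.
Qed.

Lemma adj_interior_natural (X Y : C) (t : hom X Y) (a : Q (L Y)) :
  adj_interior X (dmap Q (fmap L t) a) = dmap Q (fmap L t) (adj_interior Y a).
Proof.
  unfold adj_interior.
  rewrite (a1f_nat _ _ _ _ Rr).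
  etransitivity.
  - apply f_equal, (dmap_natural P eta t (a1f Rr (L Y) a)).
  - apply a1f_nat.
Qed.

Lemma adj_interior_deflationary (X : C) (a : Q (L X)) :
  is_2arrow eps ->
  comp (ntc eps (L X)) (fmap L (ntc eta X)) = idm (L X) ->
  ple (adj_interior X a) a.
Proof.
  intros Heps Htriangle.
  assert (Hcounit := Heps (L X) a); simpl in Hcounit.
  apply (dmap_mono _ Q _ _ (fmap L (ntc eta X))) in Hcounit.
  rewrite (dmap_retraction Q _ _ Htriangle) in Hcounit.
  unfold adj_interior.
  rewrite (a1f_nat _ _ _ _ Ll).
  exact Hcounit.
Qed.

Lemma adj_interior_le_twice (X : C) (a : Q (L X)) :
  is_2arrow eta -> ple (adj_interior X a) (adj_interior X (adj_interior X a)).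
Proof.
  intros Heta.
  apply a1f_mono.
  exact (Heta X (dmap P (ntc eta X) (a1f Rr (L X) a))).
Qed.

End AdjunctionInterior.

Theorem corollary5p11 (C D : Category) (P : Doctrine C) (Q : Doctrine D)
  (Ll : Arrow1 P Q) (Rr : Arrow1 Q P)
  (eta : NatTrans (a1F (id1 P)) (a1F (comp1 Rr Ll)))
  (eps : NatTrans (a1F (comp1 Ll Rr)) (a1F (id1 Q))) :
  is_adjunction Ll Rr eta eps ->
  is_interior_operator (doctrine_pre Q (a1F Ll))
    (fun (X : C) (a : Q (a1F Ll X)) =>
       a1f Ll X (dmap P (ntc eta X) (a1f Rr (a1F Ll X) a))).
Proof.
  intros (Heta & Heps & Htriangle & _).
  split; [|split; [|split]].
  - exact (adj_interior_mono C D P Q Ll Rr eta).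
  - exact (adj_interior_natural C D P Q Ll Rr eta).
  - intros X a.
    exact (adj_interior_deflationary C D P Q Ll Rr eta eps X a Heps (Htriangle X)).
  - intros X a.
    exact (adj_interior_le_twice C D P Q Ll Rr eta X a Heta).
Qed.
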